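(* Let $K$ be a compact Hausdorff space, $B$ the open unit ball of $C(K)$, $f_0\in B$, and $T(f)=\frac{f-f_0}{1-\overline{f_0}f}$ for $f\in B$. Let $H(B)$ denote either $A_u(B)$ or $H^\infty(B)$. Then $\psi\circ T\in H(B)$ for every $\psi\in H(B)$, so $\hat T:M_{H(B)}\to M_{H(B)}$, $\hat T(\tau)(\psi)=\tau(\psi\circ T)$, is well defined, and $\hat T$ maps $\mathcal M_{f_0}(B)$ onto $\mathcal M_0(B)$.
   Context: $A_u(B)$ is the uniform algebra of bounded holomorphic functions on $B$ that are uniformly continuous on $B$; $H^\infty(B)$ is the uniform algebra of all bounded holomorphic functions on $B$. $M_{H(B)}$ is the spectrum (nonzero multiplicative linear functionals) of $H(B)$. For $g_0\in B$, $\mathcal M_{g_0}(B)=\{\tau\in M_{H(B)}:\ \tau(g)=g(g_0)\ \text{for all } g\in A_u(B)\}$. *)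

From mathcomp Require Import all_boot all_algebra all_classical all_reals all_analysis.
From mathcomp Require Export complex.
Import GRing.Theory Num.Theory.
Set Implicit Arguments. Unset Strict Implicit. Unset Printing Implicit Defensive.
Local Open Scope ring_scope.
Local Open Scope classical_set_scope.
Local Open Scope complex_scope.

Section Defs.
Variables (R : realType) (K : topologicalType).

Definition cnorm (z : R[i]) : R := complex.Re `|z|.

Definition ccont (g : K -> R[i]) : Prop :=
  forall (x : K) (e : R), 0 < e -> \forall y \near x, cnorm (g y - g x) < e.

Definition CK : set (K -> R[i]) := [set g | ccont g].
Definition supn (g : K -> R[i]) : R := sup (range (fun x => cnorm (g x))).

Definition ballB : set (K -> R[i]) := [set g | ccont g /\ supn g < 1].

Definition holoB (psi : (K -> R[i]) -> R[i]) : Prop :=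
  forall f, ballB f -> exists L : (K -> R[i]) -> R[i],
    (forall (a : R[i]) g h, ccont g -> ccont h ->
        L (fun x => a * g x + h x) = a * L g + L h) /\
    (exists c : R, forall h, ccont h -> cnorm (L h) <= c * supn h) /\
    (forall e : R, 0 < e -> exists d : R, 0 < d /\
       forall h, ccont h -> supn h < d -> ballB (fun x => f x + h x) ->
         cnorm (psi (fun x => f x + h x) - psi f - L h) <= e * supn h).

Definition boundedB (psi : (K -> R[i]) -> R[i]) : Prop :=
  exists M : R, forall f, ballB f -> cnorm (psi f) <= M.

Definition unifcontB (psi : (K -> R[i]) -> R[i]) : Prop :=
  forall e : R, 0 < e -> exists d : R, 0 < d /\
    forall f g, ballB f -> ballB g -> supn (fun x => f x - g x) < d ->
      cnorm (psi f - psi g) < e.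

Definition Hinf (psi : (K -> R[i]) -> R[i]) : Prop := holoB psi /\ boundedB psi.
Definition Au (psi : (K -> R[i]) -> R[i]) : Prop := Hinf psi /\ unifcontB psi.

Definition HB (u : bool) : ((K -> R[i]) -> R[i]) -> Prop :=
  fun psi => if u then Au psi else Hinf psi.

(* Spectrum M_{H(B)}: nonzero multiplicative complex-linear functionals on H(B).
   Elements of H(B) are represented by total functions on K -> C, so a
   functional must only depend on the values on B. *)
Definition spectrum (u : bool) (tau : ((K -> R[i]) -> R[i]) -> R[i]) : Prop :=
  (forall psi phi, HB u psi -> HB u phi ->
      (forall f, ballB f -> psi f = phi f) -> tau psi = tau phi) /\
  (forall (a : R[i]) psi phi, HB u psi -> HB u phi ->
      tau (fun f => a * psi f + phi f) = a * tau psi + tau phi) /\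
  (forall psi phi, HB u psi -> HB u phi ->
      tau (fun f => psi f * phi f) = tau psi * tau phi) /\
  (exists psi, HB u psi /\ tau psi != 0).

Definition fiberM (u : bool) (g0 : K -> R[i]) (tau : ((K -> R[i]) -> R[i]) -> R[i]) : Prop :=
  spectrum u tau /\ (forall g, Au g -> tau g = g g0).

Definition Tmap (f0 f : K -> R[i]) : K -> R[i] :=
  fun x => (f x - f0 x) / (1 - (f0 x)^* * f x).

Definition That (f0 : K -> R[i]) (tau : ((K -> R[i]) -> R[i]) -> R[i]) :
  ((K -> R[i]) -> R[i]) -> R[i] :=
  fun psi => tau (fun f => psi (Tmap f0 f)).

End Defs.

(* For |w| < 1 the Moebius map m_w z = (z - w) / (1 - conj(w) z) maps the closed unit
   disc into itself and each disc of radius s < 1 into a disc of radius < 1; on the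
   disc it is Lipschitz with a quadratic Taylor remainder, the constants depending only
   on a bound s0 < 1 for |w|.  As T f = m_(f0 x) (f x) pointwise with s0 = sup |f0|,
   T maps B into B, is Lipschitz and is Frechet differentiable with derivative
   h |-> m'_(f0 x) (f x) h.  Hence composition with T preserves boundedness, uniform
   continuity and holomorphy, and T-hat preserves the spectrum.  Since T f0 = 0, T-hat
   maps the fiber over f0 into the fiber over 0; since the Moebius map of - f0 sends 0
   to f0 and is inverse to T on B, the functional it induces is a preimage, whence
   surjectivity. *)
From mathcomp Require Import all_boot all_algebra all_classical all_reals all_analysis.
From mathcomp Require Import complex.
From mathcomp Require Import ring lra.
Import order.Order.TTheory GRing.Theory Num.Theory numFieldNormedType.Exports.
Set Implicit Arguments. Unset Strict Implicit. Unset Printing Implicit Defensive.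
Local Open Scope ring_scope.
Local Open Scope classical_set_scope.
Local Open Scope complex_scope.

Section ComplexModulus.
Variable R : realType.
Implicit Types z w : R[i].

Lemma cnormE z : `|z| = (cnorm z)%:C.
Proof. by rewrite /cnorm normc_def. Qed.

Lemma cnorm_ge0 z : 0 <= cnorm z.
Proof. by rewrite /cnorm normc_def /= sqrtr_ge0. Qed.

Lemma cnormM z w : cnorm (z * w) = cnorm z * cnorm w.
Proof. by apply: (@complexI R); rewrite rmorphM -!cnormE normrM. Qed.

Lemma cnormD z w : cnorm (z + w) <= cnorm z + cnorm w.
Proof. by rewrite -lecR rmorphD -!cnormE ler_normD. Qed.

Lemma cnormN z : cnorm (- z) = cnorm z.
Proof. by apply: (@complexI R); rewrite -!cnormE normrN. Qed.

Lemma cdistC z w : cnorm (z - w) = cnorm (w - z).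
Proof. by rewrite -cnormN opprB. Qed.

Lemma cnormV z : cnorm z^-1 = (cnorm z)^-1.
Proof. by apply: (@complexI R); rewrite fmorphV -!cnormE normfV. Qed.

Lemma cnorm0 : cnorm 0 = 0 :> R.
Proof. by apply: (@complexI R); rewrite -!cnormE normr0. Qed.

Lemma cnorm1 : cnorm 1 = 1 :> R.
Proof. by apply: (@complexI R); rewrite -!cnormE normr1. Qed.

Lemma cnorm_eq0 z : (cnorm z == 0) = (z == 0).
Proof. by rewrite -(inj_eq (@complexI R)) -cnormE normr_eq0. Qed.

Lemma cnormJ z : cnorm z^* = cnorm z.
Proof. by case: z => a b; rewrite /cnorm !normc_def /= sqrrN. Qed.

Lemma ler_cnorm_dist z w : `|cnorm z - cnorm w| <= cnorm (z - w).
Proof.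
rewrite ler_norml; apply/andP; split.
  by have := cnormD (w - z) z; rewrite subrK cdistC; lra.
by have := cnormD (z - w) w; rewrite subrK; lra.
Qed.

Lemma sqr_cnorm z : cnorm z ^+ 2 = complex.Re z ^+ 2 + complex.Im z ^+ 2.
Proof. by rewrite /cnorm normc_def /= sqr_sqrtr // addr_ge0 // sqr_ge0. Qed.

End ComplexModulus.

Section SupNorm.
Variables (R : realType) (K : topologicalType).
Implicit Types g h : K -> R[i].

Definition cbounded g := exists M : R, forall x, cnorm (g x) <= M.

Lemma ccont_cbounded g : compact [set: K] -> ccont g -> cbounded g.
Proof.
move=> cK cg.
have cng : continuous (fun x => cnorm (g x)).
  move=> x; apply/cvgrPdist_lt => e e0.
  apply: filterS (cg x e e0) => y /= Hy.
  by rewrite cdistC in Hy; apply: le_lt_trans (ler_cnorm_dist _ _) Hy.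
have /compact_bounded [M [_ HM]] : compact ((fun x => cnorm (g x)) @` setT).
  by apply: continuous_compact => //; exact: continuous_subspaceT.
exists (M + 1) => x; apply: le_trans (ler_norm _) _.
by apply: HM; [lra | exists x].
Qed.

Lemma supn_ub g : cbounded g -> forall x, cnorm (g x) <= supn g.
Proof.
move=> [M HM] x; apply: ub_le_sup; last by exists x.
by exists M => _ [y _ <-].
Qed.

Lemma supn_empty g : ~ (exists x : K, True) -> supn g = 0.
Proof.
move=> nK; rewrite /supn -sup0; congr sup.
by apply/seteqP; split => // t [y _ _]; apply: nK; exists y.
Qed.

Lemma supn_le g M : 0 <= M -> (forall x, cnorm (g x) <= M) -> supn g <= M.
Proof.
move=> M0 HM; have [[x _]|nK] := pselect (exists x : K, True); last by rewrite supn_empty.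
apply: ge_sup; first by exists (cnorm (g x)); exists x.
by move=> _ [y _ <-].
Qed.

Lemma supn_ge0 g : cbounded g -> 0 <= supn g.
Proof.
move=> Hb; have [[x _]|nK] := pselect (exists x : K, True); last by rewrite supn_empty.
exact: le_trans (cnorm_ge0 _) (supn_ub Hb x).
Qed.

End SupNorm.

Section Continuity.
Variables (R : realType) (K : topologicalType).
Implicit Types g h : K -> R[i].

Lemma ccontC (c : R[i]) : ccont (fun _ : K => c).
Proof. by move=> x e e0; apply: nearW => y; rewrite subrr cnorm0. Qed.

Lemma ccontD g h : ccont g -> ccont h -> ccont (fun x => g x + h x).
Proof.
move=> cg ch x e e0.
have e2 : 0 < e / 2 by rewrite divr_gt0.
apply: filterS2 (cg x _ e2) (ch x _ e2) => y H1 H2.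
have -> : g y + h y - (g x + h x) = (g y - g x) + (h y - h x) by ring.
apply: le_lt_trans (cnormD _ _) _; lra.
Qed.

Lemma ccontN g : ccont g -> ccont (fun x => - g x).
Proof.
move=> cg x e e0; apply: filterS (cg x e e0) => y.
by rewrite -opprD cnormN.
Qed.

Lemma ccontB g h : ccont g -> ccont h -> ccont (fun x => g x - h x).
Proof. by move=> cg ch; apply: ccontD => //; exact: ccontN. Qed.

Lemma ccontJ g : ccont g -> ccont (fun x => (g x)^*).
Proof.
move=> cg x e e0; apply: filterS (cg x e e0) => y.
by rewrite -rmorphB cnormJ.
Qed.

Lemma ccontM g h : ccont g -> ccont h -> ccont (fun x => g x * h x).
Proof.
move=> cg ch x e e0.
set a := cnorm (g x); set b := cnorm (h x).
have a0 : 0 <= a by exact: cnorm_ge0.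
have b0 : 0 <= b by exact: cnorm_ge0.
set dg := e / (2 * (b + 1)); set dh := e / (2 * (a + 1)).
have dg0 : 0 < dg by rewrite divr_gt0 // mulr_gt0 //; lra.
have dh0 : 0 < Num.min 1 dh by rewrite lt_min ltr01 /= divr_gt0 // mulr_gt0 //; lra.
apply: filterS2 (cg x _ dg0) (ch x _ dh0) => y Hg; rewrite lt_min => /andP[Hh1 Hh].
have -> : g y * h y - g x * h x = (g y - g x) * h y + g x * (h y - h x) by ring.
apply: le_lt_trans (cnormD _ _) _; rewrite !cnormM.
have hy_le : cnorm (h y) <= b + 1.
  by have := cnormD (h y - h x) (h x); rewrite subrK /b; lra.
have Pg : cnorm (g y - g x) * cnorm (h y) < e / 2.
  apply: le_lt_trans (_ : _ <= cnorm (g y - g x) * (b + 1)) _.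
    by apply: ler_wpM2l => //; exact: cnorm_ge0.
  rewrite -ltr_pdivlMr; last lra.
  by rewrite (_ : e / 2 / (b + 1) = dg) //; rewrite /dg; field; lra.
have Ph : a * cnorm (h y - h x) < e / 2.
  apply: le_lt_trans (_ : _ <= a * dh) _; first by apply: ler_wpM2l => //; lra.
  have -> : a * dh = e / 2 * (a / (a + 1)) by rewrite /dh; field; lra.
  by rewrite gtr_pMr ?divr_gt0 // ltr_pdivrMr; lra.
lra.
Qed.

Lemma ccontV g (m : R) : 0 < m -> (forall x, m <= cnorm (g x)) ->
  ccont g -> ccont (fun x => (g x)^-1).
Proof.
move=> m0 Hm cg x e e0.
have d0 : 0 < e * (m * m) by rewrite !mulr_gt0.
apply: filterS (cg x _ d0) => y H.
have py : 0 < cnorm (g y) by have := Hm y; lra.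
have px : 0 < cnorm (g x) by have := Hm x; lra.
have gy0 : g y != 0 by rewrite -cnorm_eq0 gt_eqF.
have gx0 : g x != 0 by rewrite -cnorm_eq0 gt_eqF.
have -> : (g y)^-1 - (g x)^-1 = (g x - g y) * ((g y)^-1 * (g x)^-1).
  by field; rewrite gy0 gx0.
rewrite !cnormM !cnormV cdistC -invfM ltr_pdivrMr ?mulr_gt0 //.
apply: lt_le_trans H _; rewrite ler_pM2l //.
by apply: ler_pM; rewrite ?Hm //; lra.
Qed.

End Continuity.

Lemma le_1sub_of_gap (R : realType) (t D q : R) : 0 <= t -> 0 < D -> D <= 2 -> 0 <= q ->
  q <= D ^+ 2 * (1 - t ^+ 2) -> t <= 1 - q / 8.
Proof.
move=> t0 D0 D2 q0 H.
have H1 : 0 <= 1 - t ^+ 2.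
  rewrite leNgt; apply/negP => Hn.
  have : D ^+ 2 * (1 - t ^+ 2) < 0 by rewrite pmulr_rlt0 // exprn_gt0.
  lra.
have H2 : D ^+ 2 * (1 - t ^+ 2) <= 4 * (1 - t ^+ 2).
  apply: ler_wpM2r => //; rewrite (_ : 4 = 2 ^+ 2); last by rewrite expr2; lra.
  by apply: lerXn2r; rewrite ?nnegrE //; lra.
have H3 : 2 * t <= 1 + t ^+ 2 by have := sqr_ge0 (t - 1); rewrite sqrrB; lra.
lra.
Qed.

Definition mobius (R : realType) (w z : R[i]) := (z - w) / (1 - w^* * z).
Definition mobius_deriv (R : realType) (w z : R[i]) :=
  (1 - w^* * w) * ((1 - w^* * z)^-1 * (1 - w^* * z)^-1).

Definition lipc (R : realType) (s : R) := 2 / ((1 - s) * (1 - s)).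
Definition taylorc (R : realType) (s : R) := 2 / ((1 - s) * (1 - s) * (1 - s)).

Lemma lipc_gt0 (R : realType) (s : R) : s < 1 -> 0 < lipc s.
Proof. by move=> s1; rewrite divr_gt0 // mulr_gt0 // subr_gt0. Qed.

Lemma taylorc_gt0 (R : realType) (s : R) : s < 1 -> 0 < taylorc s.
Proof. by move=> s1; rewrite divr_gt0 // !mulr_gt0 // subr_gt0. Qed.

Lemma mobius_den_identity (R : realType) (w z : R[i]) :
  cnorm (1 - w^* * z) ^+ 2 - cnorm (z - w) ^+ 2 = (1 - cnorm z ^+ 2) * (1 - cnorm w ^+ 2).
Proof. by rewrite !sqr_cnorm; case: w => a b; case: z => c d /=; ring. Qed.

Section Mobius.
Variables (R : realType) (w : R[i]) (s0 : R).
Hypotheses (s0_ge0 : 0 <= s0) (s0_lt1 : s0 < 1) (w_le : cnorm w <= s0).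
Implicit Types z y h : R[i].

(* [lra] ignores section hypotheses: they are put on the goal explicitly. *)
Let w_le1 : cnorm w <= 1 := le_trans w_le (ltW s0_lt1).

Lemma cnormJM_le z : cnorm (w^* * z) <= s0 * cnorm z.
Proof. by rewrite cnormM cnormJ; apply: ler_wpM2r => //; exact: cnorm_ge0. Qed.

Lemma mobius_den_ge z : cnorm z <= 1 -> 1 - s0 <= cnorm (1 - w^* * z).
Proof.
move=> z1; have := cnormD (1 - w^* * z) (w^* * z); rewrite subrK cnorm1.
by have := cnormJM_le z; have := ler_wpM2l s0_ge0 z1; rewrite mulr1; lra.
Qed.

Lemma mobius_den_le z : cnorm z <= 1 -> cnorm (1 - w^* * z) <= 2.
Proof.
move=> z1; apply: le_trans (cnormD _ _) _; rewrite cnormN cnorm1.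
have := s0_lt1; have := cnormJM_le z; have := ler_wpM2l s0_ge0 z1.
by rewrite mulr1; lra.
Qed.

Lemma mobius_den_neq0 z : cnorm z <= 1 -> 1 - w^* * z != 0.
Proof.
move=> z1; rewrite -cnorm_eq0 gt_eqF //.
by have := s0_lt1; have := mobius_den_ge z1; lra.
Qed.

Lemma cnorm_mobius_denV_le z : cnorm z <= 1 -> cnorm (1 - w^* * z)^-1 <= (1 - s0)^-1.
Proof.
move=> z1; rewrite cnormV; have := s0_lt1; have := mobius_den_ge z1 => H s1.
by rewrite lef_pV2 ?posrE //; lra.
Qed.

Lemma mobius_num_le : cnorm (1 - w^* * w) <= 2.
Proof. exact: mobius_den_le w_le1. Qed.

Lemma mobius_sub z y : cnorm z <= 1 -> cnorm y <= 1 ->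
  mobius w z - mobius w y = (z - y) * (1 - w^* * w) * ((1 - w^* * z)^-1 * (1 - w^* * y)^-1).
Proof.
move=> z1 y1; have := mobius_den_neq0 z1; have := mobius_den_neq0 y1 => Hy Hz.
by rewrite /mobius; field; rewrite Hy Hz.
Qed.

Lemma cnorm_mobius_factor_le z y : cnorm z <= 1 -> cnorm y <= 1 ->
  cnorm ((1 - w^* * w) * ((1 - w^* * z)^-1 * (1 - w^* * y)^-1)) <= lipc s0.
Proof.
move=> z1 y1; rewrite !cnormM /lipc invfM.
apply: ler_pM; rewrite ?mulr_ge0 ?cnorm_ge0 ?mobius_num_le //.
by apply: ler_pM; rewrite ?cnorm_ge0 ?cnorm_mobius_denV_le.
Qed.

Lemma mobius_lipschitz z y : cnorm z <= 1 -> cnorm y <= 1 ->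
  cnorm (mobius w z - mobius w y) <= lipc s0 * cnorm (z - y).
Proof.
move=> z1 y1; rewrite mobius_sub // -mulrA cnormM mulrC.
by apply: ler_wpM2r; rewrite ?cnorm_ge0 ?cnorm_mobius_factor_le.
Qed.

Lemma cnorm_mobius_deriv_le z : cnorm z <= 1 -> cnorm (mobius_deriv w z) <= lipc s0.
Proof. by move=> z1; exact: cnorm_mobius_factor_le. Qed.

Lemma mobius_taylor z h : cnorm z <= 1 -> cnorm (z + h) <= 1 ->
  cnorm (mobius w (z + h) - mobius w z - mobius_deriv w z * h) <= taylorc s0 * cnorm h ^+ 2.
Proof.
move=> z1 zh1; have := mobius_den_neq0 z1; have := mobius_den_neq0 zh1 => Hzh Hz.
have -> : mobius w (z + h) - mobius w z - mobius_deriv w z * h =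
    h ^+ 2 * (w^* * (1 - w^* * w) *
      ((1 - w^* * z)^-1 * (1 - w^* * z)^-1 * (1 - w^* * (z + h))^-1)).
  by rewrite /mobius /mobius_deriv; field; rewrite Hzh Hz.
rewrite cnormM expr2 cnormM -expr2 mulrC.
rewrite ler_wpM2r ?exprn_ge0 ?cnorm_ge0 //.
rewrite !cnormM cnormJ /taylorc !invfM -[2]mul1r.
have := cnorm_mobius_denV_le z1; have := cnorm_mobius_denV_le zh1 => H1 H2.
apply: ler_pM; rewrite ?mulr_ge0 ?cnorm_ge0 //.
  by apply: ler_pM; rewrite ?cnorm_ge0 ?mobius_num_le ?w_le1.
by apply: ler_pM; rewrite ?mulr_ge0 ?cnorm_ge0 //; apply: ler_pM; rewrite ?cnorm_ge0.
Qed.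

(* By [mobius_den_identity], |1 - conj(w) z|^2 - |z - w|^2 >= (1 - s)(1 - s0). *)
Lemma cnorm_mobius_le z s : 0 <= s -> s < 1 -> cnorm z <= s ->
  cnorm (mobius w z) <= 1 - (1 - s) * (1 - s0) / 8.
Proof.
move=> s_ge0 s_lt1 zs; have z1 : cnorm z <= 1 by lra.
have s1 := s0_lt1; have Dge := mobius_den_ge z1; have Id := mobius_den_identity w z.
set D := cnorm (1 - w^* * z) in Dge Id *; set N := cnorm (z - w) in Id *.
have D0 : 0 < D by lra.
have -> : cnorm (mobius w z) = N / D by rewrite /mobius cnormM cnormV.
apply: (le_1sub_of_gap (D := D)); rewrite ?divr_ge0 ?cnorm_ge0 ?mobius_den_le //.
  by rewrite mulr_ge0 //; lra.
have := w_le; have := s0_ge0 => *.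
have -> : D ^+ 2 * (1 - (N / D) ^+ 2) = D ^+ 2 - N ^+ 2 by field; rewrite gt_eqF.
rewrite Id; have z0 := cnorm_ge0 z; have w0 := cnorm_ge0 w.
have : cnorm z ^+ 2 <= cnorm z by rewrite expr2 ler_piMl.
have : cnorm w ^+ 2 <= cnorm w by rewrite expr2 ler_piMl //; lra.
by move=> *; apply: ler_pM; lra.
Qed.

End Mobius.

Lemma mobius_oppK (R : realType) (w z : R[i]) : cnorm w < 1 -> cnorm z <= 1 ->
  mobius w (mobius (- w) z) = z.
Proof.
move=> w1 z1; have w0 := cnorm_ge0 w.
have Nw : cnorm (- w) <= cnorm w by rewrite cnormN.
have := mobius_den_neq0 w0 w1 (lexx _) (ltW w1).
have := mobius_den_neq0 w0 w1 Nw z1.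
rewrite /mobius rmorphN => Hz Hw; field; rewrite Hz /=.
by apply: contra_neq Hw => <-; ring.
Qed.

Section Ball.
Variables (R : realType) (K : topologicalType).
Hypothesis cK : compact [set: K].
Implicit Types f g h : K -> R[i].

Lemma ballB_cbounded f : ballB f -> cbounded f.
Proof. by case=> cf _; exact: ccont_cbounded. Qed.

Lemma ballB_supn_ge0 f : ballB f -> 0 <= supn f.
Proof. by move=> /ballB_cbounded; exact: supn_ge0. Qed.

Lemma ballB_le_supn f x : ballB f -> cnorm (f x) <= supn f.
Proof. by move=> /ballB_cbounded/supn_ub; apply. Qed.

Lemma ballB_le1 f x : ballB f -> cnorm (f x) <= 1.
Proof. by move=> hf; apply: le_trans (ballB_le_supn x hf) (ltW hf.2). Qed.

Lemma TmapE f0 f x : Tmap f0 f x = mobius (f0 x) (f x).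
Proof. by []. Qed.

Definition Tderiv f0 f x := mobius_deriv (f0 x) (f x).

Lemma ccont_mobius_denV f0 f : ballB f0 -> ballB f ->
  ccont (fun x => (1 - (f0 x)^* * f x)^-1).
Proof.
move=> hf0 hf; apply: (@ccontV _ _ _ (1 - supn f0)); first by rewrite subr_gt0 hf0.2.
  move=> x; apply: (mobius_den_ge (ballB_supn_ge0 hf0)) => //.
    exact: ballB_le_supn.
  exact: ballB_le1.
apply: ccontB; first exact: ccontC.
by apply: ccontM; [apply: ccontJ; exact: hf0.1 | exact: hf.1].
Qed.

Lemma ccont_Tmap f0 f : ballB f0 -> ballB f -> ccont (Tmap f0 f).
Proof.
move=> hf0 hf; apply: ccontM; last exact: ccont_mobius_denV.
by apply: ccontB; [exact: hf.1 | exact: hf0.1].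
Qed.

Lemma Tmap_ballB f0 f : ballB f0 -> ballB f -> ballB (Tmap f0 f).
Proof.
move=> hf0 hf; split; first exact: ccont_Tmap.
have s00 := ballB_supn_ge0 hf0; have s01 := hf0.2.
have s0 := ballB_supn_ge0 hf; have s1 := hf.2.
have q0 : 0 < (1 - supn f) * (1 - supn f0) by apply: mulr_gt0; lra.
apply: le_lt_trans (_ : _ <= 1 - (1 - supn f) * (1 - supn f0) / 8) _; last lra.
apply: supn_le.
  have : (1 - supn f) * (1 - supn f0) <= 1 by rewrite -[1]mulr1; apply: ler_pM; lra.
  lra.
by move=> x; apply: cnorm_mobius_le => //; exact: ballB_le_supn.
Qed.

Lemma supn_Tmap_sub_le f0 f g : ballB f0 -> ballB f -> ballB g ->
  supn (fun x => Tmap f0 f x - Tmap f0 g x) <= lipc (supn f0) * supn (fun x => f x - g x).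
Proof.
move=> hf0 hf hg; have L0 := ltW (lipc_gt0 hf0.2).
have bfg : cbounded (fun x => f x - g x).
  by apply: ccont_cbounded => //; apply: ccontB; [exact: hf.1 | exact: hg.1].
apply: supn_le; first by rewrite mulr_ge0 ?supn_ge0.
move=> x; apply: le_trans (mobius_lipschitz (ballB_supn_ge0 hf0) hf0.2
  (ballB_le_supn x hf0) (ballB_le1 x hf) (ballB_le1 x hg)) _.
by apply: ler_wpM2l => //; exact: supn_ub.
Qed.

Lemma ccont_Tderiv f0 f : ballB f0 -> ballB f -> ccont (Tderiv f0 f).
Proof.
move=> hf0 hf; apply: ccontM.
  by apply: ccontB; [exact: ccontC | apply: ccontM; [apply: ccontJ|]; exact: hf0.1].
by apply: ccontM; exact: ccont_mobius_denV.
Qed.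

Lemma cnorm_Tderiv_le f0 f x : ballB f0 -> ballB f -> cnorm (Tderiv f0 f x) <= lipc (supn f0).
Proof.
move=> hf0 hf; apply: (cnorm_mobius_deriv_le (ballB_supn_ge0 hf0) hf0.2).
  exact: ballB_le_supn.
exact: ballB_le1.
Qed.

Lemma supn_Tmap_taylor_le f0 f h : ballB f0 -> ballB f -> ccont h ->
    ballB (fun x => f x + h x) ->
  supn (fun x => Tmap f0 (fun y => f y + h y) x - Tmap f0 f x - Tderiv f0 f x * h x)
    <= taylorc (supn f0) * supn h ^+ 2.
Proof.
move=> hf0 hf ch hfh; have bh := ccont_cbounded cK ch.
have T0 := ltW (taylorc_gt0 hf0.2).
apply: supn_le; first by rewrite mulr_ge0 ?exprn_ge0 ?supn_ge0.
move=> x; apply: le_trans (mobius_taylor (ballB_supn_ge0 hf0) hf0.2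
  (ballB_le_supn x hf0) (ballB_le1 x hf) (ballB_le1 x hfh)) _.
apply: ler_wpM2l => //.
by apply: lerXn2r; rewrite ?nnegrE ?cnorm_ge0 ?supn_ge0 ?supn_ub.
Qed.

Lemma boundedB_comp f0 psi : ballB f0 -> boundedB psi -> boundedB (fun f => psi (Tmap f0 f)).
Proof. by move=> hf0 [M HM]; exists M => f hf; apply: HM; exact: Tmap_ballB. Qed.

Lemma unifcontB_comp f0 psi : ballB f0 -> unifcontB psi ->
  unifcontB (fun f => psi (Tmap f0 f)).
Proof.
move=> hf0 Hu e e0; have [d [d0 Hd]] := Hu e e0; have L0 := lipc_gt0 hf0.2.
exists (d / lipc (supn f0)); split; first by rewrite divr_gt0.
move=> f g hf hg Hfg; apply: Hd; [exact: Tmap_ballB | exact: Tmap_ballB |].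
apply: le_lt_trans (supn_Tmap_sub_le hf0 hf hg) _.
by rewrite mulrC -ltr_pdivlMr.
Qed.

End Ball.

Section CompositionDerivative.
Variables (R : realType) (K : topologicalType).
Hypothesis cK : compact [set: K].
Variables (f0 f : K -> R[i]) (psi L : (K -> R[i]) -> R[i]) (c : R).
Hypotheses (hf0 : ballB f0) (hf : ballB f).
Hypothesis Llin : forall (a : R[i]) g h, ccont g -> ccont h ->
  L (fun x => a * g x + h x) = a * L g + L h.
Hypothesis Lbnd : forall h, ccont h -> cnorm (L h) <= c * supn h.
Hypothesis Lrem : forall e : R, 0 < e -> exists d : R, 0 < d /\
  forall h, ccont h -> supn h < d -> ballB (fun x => Tmap f0 f x + h x) ->
    cnorm (psi (fun x => Tmap f0 f x + h x) - psi (Tmap f0 f) - L h) <= e * supn h.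

Lemma comp_deriv_linear (a : R[i]) g h : ccont g -> ccont h ->
  L (fun x => Tderiv f0 f x * (a * g x + h x)) =
    a * L (fun x => Tderiv f0 f x * g x) + L (fun x => Tderiv f0 f x * h x).
Proof.
move=> cg ch; have cT := ccont_Tderiv cK hf0 hf.
rewrite -Llin; try exact: ccontM.
by congr L; apply: funext => x; ring.
Qed.

Lemma cnorm_L_le h : ccont h -> cnorm (L h) <= `|c| * supn h.
Proof.
move=> ch; apply: le_trans (Lbnd ch) _.
by apply: ler_wpM2r; [exact/supn_ge0/(ccont_cbounded cK) | exact: ler_norm].
Qed.

Lemma comp_deriv_bounded h : ccont h ->
  cnorm (L (fun x => Tderiv f0 f x * h x)) <= `|c| * lipc (supn f0) * supn h.
Proof.
move=> ch; have bh := ccont_cbounded cK ch; have L0 := ltW (lipc_gt0 hf0.2).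
apply: le_trans (cnorm_L_le (ccontM (ccont_Tderiv cK hf0 hf) ch)) _.
rewrite -mulrA ler_wpM2l //; apply: supn_le; first by rewrite mulr_ge0 ?supn_ge0.
move=> x; rewrite cnormM; apply: ler_pM; rewrite ?cnorm_ge0 ?supn_ub //.
exact: cnorm_Tderiv_le.
Qed.

Lemma cnorm_L_quadratic_le (e : R) (r h : K -> R[i]) : ccont r -> ccont h ->
    supn r <= taylorc (supn f0) * supn h ^+ 2 ->
    supn h < e / (2 * (`|c| * taylorc (supn f0) + 1)) ->
  cnorm (L r) <= e / 2 * supn h.
Proof.
move=> cr ch r_le hd; have h0 := supn_ge0 (ccont_cbounded cK ch).
have := ltW (taylorc_gt0 hf0.2); set C2 := taylorc _ in r_le hd * => C20.
have cC2 : 0 <= `|c| * C2 := mulr_ge0 (normr_ge0 c) C20.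
apply: le_trans (cnorm_L_le cr) _.
apply: le_trans (_ : _ <= `|c| * (C2 * supn h ^+ 2)) _; first exact: ler_wpM2l.
rewrite mulrA expr2 mulrA ler_wpM2r //.
have : (`|c| * C2 + 1) * supn h < e / 2.
  have -> : e / 2 = (`|c| * C2 + 1) * (e / (2 * (`|c| * C2 + 1))).
    by field; rewrite gt_eqF //; lra.
  by rewrite ltr_pM2l //; lra.
have : `|c| * C2 * supn h <= (`|c| * C2 + 1) * supn h by rewrite ler_wpM2r //; lra.
lra.
Qed.

(* The increment of [psi \o T] splits into the remainder of [psi] at [T f], of order
   [supn (T (f + h) - T f) <= lipc * supn h], and [L] applied to the second-order
   remainder of [T], of order [supn h ^+ 2]. *)
Lemma comp_deriv_remainder (e : R) : 0 < e -> exists d : R, 0 < d /\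
  forall h, ccont h -> supn h < d -> ballB (fun x => f x + h x) ->
    cnorm (psi (Tmap f0 (fun x => f x + h x)) - psi (Tmap f0 f)
           - L (fun x => Tderiv f0 f x * h x)) <= e * supn h.
Proof.
move=> e0; have C10 := lipc_gt0 hf0.2; have C20 := ltW (taylorc_gt0 hf0.2).
set C1 := lipc (supn f0) in C10 *; set C2 := taylorc (supn f0) in C20 *; set c' := `|c|.
have cC2 : 0 <= c' * C2 := mulr_ge0 (normr_ge0 c) C20.
have e1 : 0 < e / (2 * C1) by rewrite divr_gt0 // mulr_gt0.
have [d1 [d10 Hd1]] := Lrem e1.
have D0 : 0 < c' * C2 + 1 by lra.
exists (Num.min (d1 / C1) (e / (2 * (c' * C2 + 1)))); split.
  by rewrite lt_min; apply/andP; split; apply: divr_gt0 => //; exact: mulr_gt0.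
move=> h ch; rewrite lt_min => /andP[hd1 hd2] hfh.
set g := fun x => f x + h x in hfh *.
set k := fun x => Tmap f0 g x - Tmap f0 f x.
set r := fun x => k x - Tderiv f0 f x * h x.
have ck : ccont k by apply: ccontB; apply: ccont_Tmap.
have cr : ccont r by apply/ccontB/ccontM => //; exact: ccont_Tderiv.
have k_le : supn k <= C1 * supn h.
  have := supn_Tmap_sub_le cK hf0 hfh hf.
  by rewrite (_ : (fun x => g x - f x) = h) //; apply: funext => x; rewrite /g addrC addKr.
have r_le : supn r <= C2 * supn h ^+ 2 := supn_Tmap_taylor_le cK hf0 hf ch hfh.
have Tg : (fun x => Tmap f0 f x + k x) = Tmap f0 g.
  by apply: funext => x; rewrite /k addrC subrK.
have psi_k : cnorm (psi (Tmap f0 g) - psi (Tmap f0 f) - L k) <= e / (2 * C1) * supn k.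
  rewrite -Tg; apply: Hd1 => //; last by rewrite Tg; exact: Tmap_ballB.
  by apply: le_lt_trans k_le _; rewrite mulrC -ltr_pdivlMr.
have -> : L (fun x => Tderiv f0 f x * h x) = -1 * L r + L k.
  by rewrite -Llin //; congr L; apply: funext => x; rewrite /r; ring.
have -> : psi (Tmap f0 g) - psi (Tmap f0 f) - (-1 * L r + L k) =
  (psi (Tmap f0 g) - psi (Tmap f0 f) - L k) + L r by ring.
apply: le_trans (cnormD _ _) _.
have P1 : e / (2 * C1) * supn k <= e / 2 * supn h.
  have -> : e / 2 * supn h = e / (2 * C1) * (C1 * supn h) by field; rewrite gt_eqF.
  by apply: ler_wpM2l => //; exact: ltW.
have P2 := cnorm_L_quadratic_le cr ch r_le hd2.
lra.
Qed.

End CompositionDerivative.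

Section InducedMap.
Variables (R : realType) (K : topologicalType).
Hypothesis cK : compact [set: K].
Implicit Types (f : K -> R[i]) (psi : (K -> R[i]) -> R[i]).

Lemma holoB_comp (f0 : K -> R[i]) psi :
  ballB f0 -> holoB psi -> holoB (fun f => psi (Tmap f0 f)).
Proof.
move=> hf0 Hpsi f hf.
have [L [Llin [[c Lbnd] Lrem]]] := Hpsi _ (Tmap_ballB cK hf0 hf).
exists (fun h => L (fun x => Tderiv f0 f x * h x)); split; last split.
- by move=> a g h; exact: comp_deriv_linear.
- by exists (`|c| * lipc (supn f0)) => h; exact: comp_deriv_bounded.
- exact: (comp_deriv_remainder cK hf0 hf Llin Lbnd Lrem).
Qed.

Lemma HB_comp u (f0 : K -> R[i]) psi :
  ballB f0 -> HB u psi -> HB u (fun f => psi (Tmap f0 f)).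
Proof.
move=> hf0; case: u => /= [[[Hh Hb] Hu]|[Hh Hb]].
  by split; [split; [exact: holoB_comp | exact: boundedB_comp] | exact: unifcontB_comp].
by split; [exact: holoB_comp | exact: boundedB_comp].
Qed.

Lemma HB_const u (a : R[i]) : HB u (fun _ : K -> R[i] => a).
Proof.
have Hh : holoB (fun _ : K -> R[i] => a).
  move=> f _; exists (fun _ => 0); split; first by move=> *; rewrite mulr0 addr0.
  split; first by exists 0 => h _; rewrite mul0r cnorm0.
  move=> e e0; exists 1; split => // h ch _ _.
  by rewrite subrr subr0 cnorm0 mulr_ge0 ?supn_ge0 ?ltW //; exact: ccont_cbounded.
have Hb : boundedB (fun _ : K -> R[i] => a) by exists (cnorm a).
have Hu : unifcontB (fun _ : K -> R[i] => a).
  by move=> e e0; exists 1; split => // *; rewrite subrr cnorm0.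
by case: u.
Qed.

Lemma spectrum_That u (f0 : K -> R[i]) tau :
  ballB f0 -> spectrum u tau -> spectrum u (That f0 tau).
Proof.
move=> hf0 [wd [lin [mul [psi0 [Hpsi0 tau_psi0]]]]].
split.
  move=> psi phi Hpsi Hphi Heq; apply: wd; try exact: HB_comp.
  by move=> f hf; apply: Heq; exact: Tmap_ballB.
split; first by move=> a psi phi Hpsi Hphi; apply: lin; exact: HB_comp.
split; first by move=> psi phi Hpsi Hphi; apply: mul; exact: HB_comp.
exists (fun _ => 1); split; first exact: HB_const.
have := mul _ _ Hpsi0 (HB_const u 1).
rewrite /That (_ : (fun f => psi0 f * 1) = psi0); last by apply: funext => f; rewrite mulr1.
by move=> E; apply: contra_neq tau_psi0 => H1; rewrite E H1 mulr0.
Qed.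

Lemma Tmap_id (f0 : K -> R[i]) : Tmap f0 f0 = (fun _ => 0).
Proof. by apply: funext => x; rewrite /Tmap subrr mul0r. Qed.

Lemma Tmap_opp0 (f0 : K -> R[i]) : Tmap (fun x => - f0 x) (fun _ => 0) = f0.
Proof. by apply: funext => x; rewrite /Tmap mulr0 subr0 invr1 mulr1 sub0r opprK. Qed.

Lemma ballB_opp (f0 : K -> R[i]) : ballB f0 -> ballB (fun x => - f0 x).
Proof.
case=> cf sf; split; first exact: ccontN.
suff -> : supn (fun x => - f0 x) = supn f0 by [].
rewrite /supn (_ : (fun x => cnorm (- f0 x)) = (fun x => cnorm (f0 x))) //.
by apply: funext => x; rewrite cnormN.
Qed.

Lemma Tmap_oppK (f0 : K -> R[i]) f :
  ballB f0 -> ballB f -> Tmap f0 (Tmap (fun x => - f0 x) f) = f.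
Proof.
move=> hf0 hf; apply: funext => x; rewrite !TmapE.
apply: mobius_oppK; last exact: ballB_le1 hf.
exact: le_lt_trans (ballB_le_supn cK x hf0) hf0.2.
Qed.

End InducedMap.

Theorem lemma3p3 (R : realType) (K : topologicalType)
    (hK : hausdorff_space K) (cK : compact [set: K])
    (f0 : K -> R[i]) (hf0 : ballB f0) (u : bool) :
  (forall psi, HB u psi -> HB u (fun f => psi (Tmap f0 f))) /\
  (forall tau, spectrum u tau -> spectrum u (That f0 tau)) /\
  (forall tau, fiberM u f0 tau -> fiberM u (fun _ : K => 0) (That f0 tau)) /\
  (forall sigma, fiberM u (fun _ : K => 0) sigma ->
     exists tau, fiberM u f0 tau /\
       (forall psi, HB u psi -> That f0 tau psi = sigma psi)).
Proof.
have hf0N := ballB_opp hf0.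
split; first by move=> psi; exact: HB_comp.
split; first by move=> tau; exact: spectrum_That.
split.
  move=> tau [sp fib]; split; first exact: spectrum_That.
  move=> g Hg; rewrite /That fib; last exact: (HB_comp cK (u := true) hf0 Hg).
  by rewrite Tmap_id.
move=> sigma [sp fib]; exists (That (fun x => - f0 x) sigma); split.
  split; first exact: spectrum_That.
  move=> g Hg; rewrite /That fib; last exact: (HB_comp cK (u := true) hf0N Hg).
  by rewrite Tmap_opp0.
move=> psi Hpsi; apply: sp.1 => //; first exact: (HB_comp cK hf0N (HB_comp cK hf0 Hpsi)).
by move=> f hf; rewrite /= Tmap_oppK.
Qed.
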